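(* If the pointed Kripke models $(\mathcal{M},v)$ and $(\mathcal{M}',v')$ are $G$-bisimilar for a group $G\subseteq\mathcal{A}$ and $\varphi$ is a DBI formula with $\mathsf{ta}(\varphi)\subseteq G$, then $\mathcal{M},v\vDash\varphi$ iff $\mathcal{M}',v'\vDash\varphi$.
   Context: Agents $\mathcal{A}=\{1,\dots,n\}$; formulas $\varphi ::= p \mid \neg\varphi \mid (\varphi\wedge\varphi)\mid B_i\varphi$ interpreted on Kripke models $\mathcal{M}=\langle S,R,V\rangle$ in the standard way ($\mathcal{M},w\vDash B_i\varphi$ iff $\varphi$ holds at all $R_i$-successors of $w$). Pointed Kripke models are bisimilar iff there is a bisimulation (a nonempty relation satisfying the standard Forth, Back, and Atoms conditions for all agents) relating their points. $(\mathcal{M},v)$ and $(\mathcal{M}',v')$ are $G$-bisimilar iff for every $a\in G$: ($G$-Forth) if $vR_au$ then there is $u'$ with $v'R'_au'$ and $(\mathcal{M},u)$ bisimilar to $(\mathcal{M}',u')$; ($G$-Back) if $v'R'_au'$ then there is $u$ with $vR_au$ and $(\mathcal{M},u)$ bisimilar to $(\mathcal{M}',u')$. Target agents: $\mathsf{ta}(p)=\varnothing$, $\mathsf{ta}(\neg\phi)=\mathsf{ta}(\phi)$, $\mathsf{ta}(\phi\wedge\psi)=\mathsf{ta}(\phi)\cup\mathsf{ta}(\psi)$, $\mathsf{ta}(B_i\phi)=\{i\}$. DBI (deterministic belief increase) goal formulas are given by $\varphi ::= B_i\xi \mid B_i(\xi\wedge\varphi)\mid(\varphi\wedge\varphi)\mid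 B_i\varphi$ with $\xi$ purely propositional, i.e., nonempty conjunctions of formulas of the form $B_i\psi$. *)

From mathcomp Require Import all_boot.
Unset Printing Implicit Defensive.

Inductive form (n : nat) (Atom : Type) : Type :=
| FAtom : Atom -> form n Atom
| FNeg : form n Atom -> form n Atom
| FAnd : form n Atom -> form n Atom -> form n Atom
| FB : 'I_n -> form n Atom -> form n Atom.

Arguments FAtom {n Atom} _.
Arguments FNeg {n Atom} _.
Arguments FAnd {n Atom} _ _.
Arguments FB {n Atom} _ _.

Record kripke (n : nat) (Atom : Type) := Kripke {
  st : Type;
  rel : 'I_n -> st -> st -> Prop;
  val : st -> Atom -> Prop }.

Arguments st {n Atom} _.
Arguments rel {n Atom} _ _ _ _.
Arguments val {n Atom} _ _ _.

Fixpoint sat {n : nat} {Atom : Type} (M : kripke n Atom) (w : st M)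
    (phi : form n Atom) : Prop :=
  match phi with
  | FAtom p => val M w p
  | FNeg f => ~ @sat n Atom M w f
  | FAnd f g => @sat n Atom M w f /\ @sat n Atom M w g
  | FB i f => forall u, rel M i w u -> @sat n Atom M u f
  end.

Definition is_bisimulation {n : nat} {Atom : Type} (M M' : kripke n Atom)
    (Z : st M -> st M' -> Prop) : Prop :=
  forall w w', Z w w' ->
    (forall p, val M w p <-> val M' w' p) /\
    (forall i u, rel M i w u -> exists u', rel M' i w' u' /\ Z u u') /\
    (forall i u', rel M' i w' u' -> exists u, rel M i w u /\ Z u u').

Definition bisimilar {n : nat} {Atom : Type} (M M' : kripke n Atom)
    (w : st M) (w' : st M') : Prop :=
  exists Z, is_bisimulation M M' Z /\ Z w w'.

Definition G_bisimilar {n : nat} {Atom : Type} (G : {set 'I_n})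
    (M M' : kripke n Atom) (v : st M) (v' : st M') : Prop :=
  forall a, a \in G ->
    (forall u, rel M a v u -> exists u', rel M' a v' u' /\ bisimilar M M' u u') /\
    (forall u', rel M' a v' u' -> exists u, rel M a v u /\ bisimilar M M' u u').

Fixpoint ta {n : nat} {Atom : Type} (phi : form n Atom) : {set 'I_n} :=
  match phi with
  | FAtom _ => set0
  | FNeg f => @ta n Atom f
  | FAnd f g => @ta n Atom f :|: @ta n Atom g
  | FB i _ => [set i]
  end.

Fixpoint propositional {n : nat} {Atom : Type} (phi : form n Atom) : Prop :=
  match phi with
  | FAtom _ => True
  | FNeg f => @propositional n Atom f
  | FAnd f g => @propositional n Atom f /\ @propositional n Atom g
  | FB _ _ => False
  end.

Inductive DBI {n : nat} {Atom : Type} : form n Atom -> Prop :=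
| DBI_B_prop : forall i xi, propositional xi -> DBI (FB i xi)
| DBI_B_and : forall i xi phi, propositional xi -> DBI phi -> DBI (FB i (FAnd xi phi))
| DBI_and : forall phi psi, DBI phi -> DBI psi -> DBI (FAnd phi psi)
| DBI_B : forall i phi, DBI phi -> DBI (FB i phi).

From Stdlib Require Import Setoid.
From mathcomp Require Import all_boot.

(* Bisimilar states satisfy the same formulas, so a formula B_i f with i in G
   has the same truth value at G-bisimilar points: their i-successors are
   matched up to bisimilarity.  A DBI formula is a conjunction of such boxes,
   and its target agents are exactly the agents of these outermost boxes; no
   atom occurs outside a box, which matters since G-bisimilar points need not
   agree on atoms. *)

Section Bisimulation.

Variables (n : nat) (Atom : Type) (M M' : kripke n Atom).

Lemma bisimulation_sat (Z : st M -> st M' -> Prop) (phi : form n Atom) :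
  is_bisimulation M M' Z ->
  forall w w', Z w w' -> (sat M w phi <-> sat M' w' phi).
Proof.
move=> HZ; elim: phi => [p|f IHf|f IHf g IHg|i f IHf] w w' Zww' /=;
  have [Hval [Hforth Hback]] := HZ w w' Zww'.
- exact: Hval.
- by rewrite (IHf w w').
- by rewrite (IHf w w') // (IHg w w').
- split=> Hbox.
  + move=> u' /Hback [u [Hu Zuu']]; rewrite -(IHf u u') //; exact: Hbox.
  + move=> u /Hforth [u' [Hu' Zuu']]; rewrite (IHf u u') //; exact: Hbox.
Qed.

Lemma bisimilar_sat (phi : form n Atom) (w : st M) (w' : st M') :
  bisimilar M M' w w' -> (sat M w phi <-> sat M' w' phi).
Proof. by case=> Z [HZ Zww']; apply: bisimulation_sat HZ w w' Zww'. Qed.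

Lemma G_bisimilar_sat_FB (G : {set 'I_n}) (v : st M) (v' : st M')
    (i : 'I_n) (f : form n Atom) :
  G_bisimilar G M M' v v' -> i \in G ->
  (sat M v (FB i f) <-> sat M' v' (FB i f)).
Proof.
move=> HG iG; have [Hforth Hback] := HG i iG; split=> /= Hbox.
- move=> u' /Hback [u [Hu Huu']]; rewrite -(bisimilar_sat f _ _ Huu'); exact: Hbox.
- move=> u /Hforth [u' [Hu' Huu']]; rewrite (bisimilar_sat f _ _ Huu'); exact: Hbox.
Qed.

End Bisimulation.

Theorem lemma2 (n : nat) (Atom : Type) (M M' : kripke n Atom)
    (v : st M) (v' : st M') (G : {set 'I_n}) (phi : form n Atom) :
  G_bisimilar G M M' v v' -> DBI phi -> ta phi \subset G ->
  (sat M v phi <-> sat M' v' phi).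
Proof.
move=> HG; elim=> [i xi _|i xi f _ _ _|f g _ IHf _ IHg|i f _ _];
  rewrite /ta ?sub1set -/ta; try exact: G_bisimilar_sat_FB HG.
by rewrite subUset /= => /andP[/IHf -> /IHg ->].
Qed.
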